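(* Let $n\ge 1$ and $a_i=F_{i+2}-i-2$. For every game path of the Zeckendorf game on $n$ starting from $\{F_1^n\}$, if $MC_i$ denotes the number of moves of type $C_i$ ($i\ge 2$) in the path, then the length of the path equals $$\sum_{i=1}^{i_{\max}(n)} a_i\,\delta_i\;-\;\sum_{i\ge 2}(i-1)\,MC_i .$$ In particular, a game path attains length exactly $\sum_{i} a_i\delta_i$ if and only if it uses no moves $C_i$ with $i\ge 2$ (i.e. only splitting moves and $C_1$).
   Context: Fibonacci numbers are indexed by $F_1=1$, $F_2=2$, $F_{i+1}=F_i+F_{i-1}$. A game state is a finite multiset of Fibonacci numbers (tracked by index); $\{F_1^n\}$ denotes $n$ copies of $F_1$. The legal moves are: $C_1$: replace $F_1,F_1$ by $F_2$; for $i\ge 2$, $C_i$: replace $F_{i-1},F_i$ by $F_{i+1}$; $S_2$: replace $F_2,F_2$ by $F_1,F_3$; for $i\ge 3$, $S_i$: replace $F_i,F_i$ by $F_{i-2},F_{i+1}$. The game on $n$ starts at $\{F_1^n\}$ and a game path is a sequence of legal moves continued until no legal move is available, which happens exactly at the Zeckendorf decomposition of $n$ (the unique representation of $n$ as a sum of $F_i$'s with distinct, pairwise non-consecutive indices); the length of a path is its number of moves. Write the Zeckendorf decomposition as $n=\sum_{i=1}^{i_{\max}(n)}\delta_i F_i$ with $\delta_i\in\{0,1\}$ and $i_{\max}(n)$ the largest index occurring. *)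

From HB Require Import structures.
From mathcomp Require Import all_boot all_order all_algebra.
Set Implicit Arguments. Unset Strict Implicit. Unset Printing Implicit Defensive.
Import GRing.Theory Num.Theory.

(* Fibonacci numbers with F_1 = 1, F_2 = 2, F_{i+1} = F_i + F_{i-1};
   F_0 := 1 is an unused auxiliary value. *)
Fixpoint fib (i : nat) : nat :=
  match i with
  | 0 => 1
  | 1 => 1
  | (k.+1 as j).+1 => fib j + fib k
  end.

(* A game state: multiset of Fibonacci numbers tracked by index,
   s i = multiplicity of F_i (index 0 unused). *)
Definition state := nat -> nat.

Inductive move := C of nat | S of nat.

Definition move_eqb (m1 m2 : move) : bool :=
  match m1, m2 with
  | C i, C j => i == j
  | S i, S j => i == j
  | _, _ => false
  end.
Lemma move_eqP : Equality.axiom move_eqb.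
Proof.
by case=> [i|i] [j|j] /=; (try by constructor); apply: (iffP eqP) => [->|[]].
Qed.
HB.instance Definition _ := hasDecEq.Build move move_eqP.

Definition inc (i : nat) (s : state) : state :=
  fun j => if j == i then (s j).+1 else s j.
Definition dec (i : nat) (s : state) : state :=
  fun j => if j == i then (s j).-1 else s j.

(* Legality of a move in a state. C_1 : F_1,F_1 -> F_2;
   C_i (i>=2) : F_{i-1},F_i -> F_{i+1}; S_2 : F_2,F_2 -> F_1,F_3;
   S_i (i>=3) : F_i,F_i -> F_{i-2},F_{i+1}. *)
Definition legal (m : move) (s : state) : bool :=
  match m with
  | C i => if i == 1 then 2 <= s 1
           else (2 <= i) && (1 <= s i.-1) && (1 <= s i)
  | S i => (2 <= i) && (2 <= s i)
  end.

Definition apply_move (m : move) (s : state) : state :=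
  match m with
  | C i => if i == 1 then inc 2 (dec 1 (dec 1 s))
           else inc i.+1 (dec i (dec i.-1 s))
  | S i => if i == 2 then inc 3 (inc 1 (dec 2 (dec 2 s)))
           else inc i.+1 (inc (i - 2) (dec i (dec i s)))
  end.

Definition terminal (s : state) : Prop := forall m, ~~ legal m s.

Fixpoint is_path (s : state) (ms : seq move) : Prop :=
  match ms with
  | [::] => terminal s
  | m :: ms' => legal m s /\ is_path (apply_move m s) ms'
  end.

Definition start (n : nat) : state := fun j => if j == 1 then n else 0.

Definition game_path (n : nat) (ms : seq move) : Prop := is_path (start n) ms.

Definition zeckendorf (n : nat) (delta : nat -> nat) (imax : nat) : Prop :=
  [/\ 1 <= imax, delta imax = 1,
      forall i, 1 <= i <= imax -> delta i <= 1,
      forall i, 1 <= i < imax -> delta i * delta i.+1 = 0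
    & n = \sum_(1 <= i < imax.+1) delta i * fib i].

Definition acoef (i : nat) : int := (fib (i + 2))%:Z - (i + 2)%:Z.

Definition MC (ms : seq move) (i : nat) : nat := count (pred1 (C i)) ms.


(* Index of a move; any MC_i with i > maxidx ms is 0, so the infinite sum
   sum_{i>=2} (i-1) MC_i is the finite sum up to maxidx ms. *)
Definition midx (m : move) : nat := match m with C i => i | S i => i end.
Definition maxidx (ms : seq move) : nat := \max_(m <- ms) midx m.

From mathcomp Require Import all_boot all_order all_algebra.
From mathcomp Require Import zify.
Import GRing.Theory Num.Theory.
Set Implicit Arguments. Unset Strict Implicit.
Local Open Scope ring_scope.

(* Give a state s the linear potential  sum_i s_i c_i  for a coefficient
   sequence c.  A legal move changes it by an amount [move_delta c m] that
   depends only on the move.  Two coefficient sequences are used: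
   - c = F (Fibonacci numbers): every move has delta 0, so the value
     sum_i s_i F_i of the state stays n throughout the game;
   - c = a, a_i = F_{i+2} - i - 2: splitting moves and C_1 have delta 1,
     while C_i (i >= 2) has delta i = 1 + (i - 1).
   A game path ends in a terminal state, whose digits are in {0,1} with no
   two consecutive ones; by uniqueness of the Zeckendorf representation the
   final state is delta.  As a_1 = 0, the a-potential goes from 0 to
   sum_i a_i delta_i, whence
     length + sum over the moves C_i of the path of (i - 1) = sum_i a_i delta_i.
   Grouping the excess sum by the index i gives the theorem. *)

(* [fib] is only ever unfolded through its recurrence [fibSS]. *)
Local Arguments fib : simpl never.

Lemma fibSS k : fib k.+2 = (fib k.+1 + fib k)%N.
Proof. by []. Qed.

Lemma big_nat_truncated (R : Type) (idx : R) (op : Monoid.law idx)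
    (F : nat -> R) (a imax N : nat) :
  (a <= imax.+1)%N -> (imax < N)%N ->
  \big[op/idx]_(a <= i < N) (if (i <= imax)%N then F i else idx) =
  \big[op/idx]_(a <= i < imax.+1) F i.
Proof.
move=> ha hN; rewrite (big_cat_nat ha hN) /=.
rewrite [X in op _ X]big_nat_cond [X in op _ X]big1 ?Monoid.mulm1.
  by apply: eq_big_nat => i /andP[_ hi]; rewrite ifT.
by move=> i /andP[/andP[hi _] _]; rewrite ifN // -ltnNge.
Qed.

(* The potential of the state s with coefficients c, over the indices
   1 <= i < N; N bounds every index a game under study can reach. *)
Definition potential (c : nat -> int) (N : nat) (s : state) : int :=
  \sum_(1 <= i < N) (s i)%:Z * c i.

Lemma potential_start c N n : (1 < N)%N -> potential c N (start n) = n%:Z * c 1%N.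
Proof.
move=> hN; rewrite /potential big_ltn // {1}/start eqxx big_nat_cond big1 ?addr0 //.
by move=> i /andP[/andP[hi _] _]; rewrite /start gtn_eqF // mul0r.
Qed.

Lemma potential_inc c N s j : (1 <= j < N)%N ->
  potential c N (inc j s) = potential c N s + c j.
Proof.
move=> hj; have -> : c j = \sum_(1 <= i < N) (if i == j then c i else 0)
  by rewrite -big_mkcond big_nat1_eq hj.
rewrite /potential -big_split /=; apply: eq_bigr => i _; rewrite /inc.
by case: eqP => [->|_]; rewrite ?addr0 // -addn1 PoszD mulrDl mul1r.
Qed.

Lemma potential_dec c N s j : (0 < s j)%N -> (1 <= j < N)%N ->
  potential c N (dec j s) = potential c N s - c j.
Proof.
move=> hs hj; have -> : c j = \sum_(1 <= i < N) (if i == j then c i else 0)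
  by rewrite -big_mkcond big_nat1_eq hj.
rewrite /potential -sumrB /=; apply: eq_bigr => i _; rewrite /dec.
case: eqP => [->|_]; rewrite ?subr0 //.
have -> : ((s j).-1)%:Z = (s j)%:Z - 1 by lia.
by rewrite mulrBl mul1r.
Qed.

Definition move_delta (c : nat -> int) (m : move) : int :=
  match m with
  | C i => if i == 1%N then c 2%N - c 1%N - c 1%N else c i.+1 - c i - c i.-1
  | S i => if i == 2%N then c 3%N + c 1%N - c 2%N - c 2%N
           else c i.+1 + c i.-2 - c i - c i
  end.

Lemma potential_move c N s m : legal m s -> ((midx m).+1 < N)%N ->
  potential c N (apply_move m s) = potential c N s + move_delta c m.
Proof.
have dec_same j t : (1 < t j)%N -> (0 < dec j t j)%N by rewrite /dec eqxx; lia.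
case: m => [[|[|k]]|[|[|[|k]]]] //= /[swap] hN.
- move=> h1; rewrite potential_inc ?potential_dec ?dec_same //; lia.
- case/andP=> h1 h2.
  have h2' : (0 < dec k.+1 s k.+2)%N by rewrite /dec eqSS (gtn_eqF (ltnSn k)).
  rewrite potential_inc ?potential_dec //; lia.
- move=> h2; rewrite !potential_inc ?potential_dec ?dec_same //; lia.
- move=> h2; rewrite subSS subn1 /=.
  rewrite !potential_inc ?potential_dec ?dec_same //; lia.
Qed.

Definition fibz (i : nat) : int := (fib i)%:Z.

Lemma potential_fib N s :
  potential fibz N s = (\sum_(1 <= i < N) s i * fib i)%N%:Z.
Proof.
by rewrite /potential -natz natr_sum; apply: eq_bigr => i _; rewrite natrM !natz.
Qed.

Lemma fib_move_delta m s : legal m s -> move_delta fibz m = 0.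
Proof.
by case: m => [[|[|k]]|[|[|[|k]]]] //= _; rewrite /fibz ?fibSS; lia.
Qed.

Definition excess (m : move) : nat := if m is C i then i.-1 else 0%N.

Lemma acoef_move_delta m s : legal m s -> move_delta acoef m = 1 + (excess m)%:Z.
Proof.
by case: m => [[|[|k]]|[|[|[|k]]]] //= _; rewrite /acoef ?addn2 ?fibSS /=; lia.
Qed.

Definition final (s : state) (ms : seq move) : state :=
  foldl (fun t m => apply_move m t) s ms.

Lemma path_terminal s ms : is_path s ms -> terminal (final s ms).
Proof. by elim: ms s => [|m ms IH] s //= [_ /IH]. Qed.

Lemma path_potential (c : nat -> int) (d : move -> int) N s ms :
  (forall m t, legal m t -> move_delta c m = d m) ->
  is_path s ms -> all (fun m => (midx m).+1 < N)%N ms ->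
  potential c N (final s ms) = potential c N s + \sum_(m <- ms) d m.
Proof.
move=> hd; elim: ms s => [|m ms IH] s /=; first by rewrite big_nil addr0.
case=> hl hp /andP[hm hms].
by rewrite IH // potential_move // (hd _ _ hl) big_cons addrA.
Qed.

Lemma final_value n ms N : game_path n ms ->
  all (fun m => (midx m).+1 < N)%N ms -> (1 < N)%N ->
  (\sum_(1 <= i < N) final (start n) ms i * fib i)%N = n.
Proof.
move=> hp hN hN1.
have := path_potential (d := fun=> 0) (fun m t => @fib_move_delta m t) hp hN.
rewrite big1 // addr0 potential_start // !potential_fib.
by rewrite (_ : fibz 1 = 1) // mulr1 => /eqP; rewrite eqz_nat => /eqP.
Qed.

Section ZeckendorfUniqueness.
Local Close Scope ring_scope.

Definition zeck_like (x : nat -> nat) : Prop :=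
  (forall i, 1 <= i -> x i <= 1) /\ (forall i, 1 <= i -> x i * x i.+1 = 0).

(* With no legal C_1, S_i or C_i left, a terminal state has Zeckendorf shape. *)
Lemma terminal_zeck_like s : terminal s -> zeck_like s.
Proof.
move=> ht; split=> [[|[|i]] // _|[|i] // _].
- by have := ht (C 1); rewrite /legal /=; lia.
- by have := ht (S i.+2); rewrite /legal /=; lia.
- have := ht (C i.+2); rewrite /legal /=.
  by case: (s i.+1) => [|?]; case: (s i.+2) => [|?]; rewrite ?muln0.
Qed.

Lemma zeck_like_sum_lt x M : zeck_like x ->
  \sum_(1 <= i < M.+1) x i * fib i < fib M.+1.
Proof.
case=> x_le1 x_sparse; elim/ltn_ind: M => -[|[|k]] IH.
- by rewrite big_geq.
- by rewrite big_nat1; have := x_le1 1 isT; rewrite /fib; lia.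
rewrite big_nat_recr //= fibSS.
have := x_le1 k.+2 isT; case hxk: (x k.+2) => [|[|//]] _.
  by rewrite mul0n addn0 (leq_trans (IH k.+1 _)) ?leq_addr.
have hx1 : x k.+1 = 0 by have := x_sparse k.+1 isT; rewrite hxk muln1.
rewrite big_nat_recr //= hx1 mul0n addn0 mul1n addnC ltn_add2l.
exact: IH.
Qed.

(* Uniqueness of Zeckendorf representations: by the bound above the top
   digits must agree, and one concludes by induction on the range. *)
Lemma zeck_like_unique x y N : zeck_like x -> zeck_like y ->
  \sum_(1 <= i < N) x i * fib i = \sum_(1 <= i < N) y i * fib i ->
  forall i, 1 <= i < N -> x i = y i.
Proof.
move=> zx zy; elim: N => [|[|M] IH] heq i hi; try lia.
have bx := zeck_like_sum_lt M zx; have by' := zeck_like_sum_lt M zy.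
move: heq; rewrite !(big_nat_recr M.+1) //= => heq.
have hxy : x M.+1 = y M.+1.
  have := zx.1 M.+1 isT; have := zy.1 M.+1 isT.
  by case: (x M.+1) heq => [|[|?]]; case: (y M.+1) => [|[|?]] //; lia.
case: (ltnP i M.+1) => him; last by have -> : i = M.+1 by lia.
by apply: IH => //; [rewrite hxy in heq; lia | lia].
Qed.

End ZeckendorfUniqueness.

Lemma final_is_zeckendorf n delta imax ms N :
  zeckendorf n delta imax -> game_path n ms ->
  all (fun m => (midx m).+1 < N)%N ms -> (imax < N)%N ->
  forall i, (1 <= i < N)%N ->
  final (start n) ms i = if (i <= imax)%N then delta i else 0%N.
Proof.
move=> [imax_ge1 _ d_le1 d_sparse n_eq] hp hN himax.
apply: zeck_like_unique.
- exact/terminal_zeck_like/path_terminal.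
- split=> i hi; first by case: ifP => // ?; apply: d_le1; lia.
  case: (ltnP i imax) => hi'; first by rewrite !ifT ?d_sparse //; lia.
  by rewrite muln0.
rewrite final_value //; last by lia.
rewrite n_eq -(big_nat_truncated (a := 1%N) _ _ isT himax).
by apply: eq_bigr => i _; case: ifP.
Qed.

Lemma midx_le_maxidx ms : all (fun m => midx m <= maxidx ms)%N ms.
Proof. by apply/allP => m hm; exact: leq_bigmax_seq. Qed.

Lemma sum_move_costs ms :
  \sum_(m <- ms) (1 + (excess m)%:Z) = (size ms)%:Z + (\sum_(m <- ms) excess m)%N%:Z.
Proof. by elim: ms => [|m ms IH]; rewrite ?big_nil ?big_cons //= IH; lia. Qed.

(* The length identity: comparing the a-potential at the start (where it is
   0, as a_1 = 0) and at the end of the game. *)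
Lemma game_length_identity n delta imax ms :
  zeckendorf n delta imax -> game_path n ms ->
  (size ms)%:Z + (\sum_(m <- ms) excess m)%N%:Z =
  \sum_(1 <= i < imax.+1) acoef i * (delta i)%:Z.
Proof.
move=> hz hp; pose N := (maxn (maxidx ms) imax).+2.
have hN : all (fun m => (midx m).+1 < N)%N ms.
  by apply/allP => m /(allP (midx_le_maxidx ms)); rewrite /N; lia.
have himax : (imax < N)%N by rewrite /N; lia.
have acoef1 : acoef 1 = 0 by [].
have := path_potential (fun m t => @acoef_move_delta m t) hp hN.
rewrite potential_start; last by rewrite /N.
rewrite acoef1 mulr0 add0r sum_move_costs => <-; rewrite /potential.
under eq_big_nat => i hi do rewrite (final_is_zeckendorf hz hp hN himax hi).
rewrite -(big_nat_truncated (a := 1%N) _ _ isT himax).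
by apply: eq_bigr => i _; case: ifP; rewrite ?mul0r // mulrC.
Qed.

Lemma eq_C i j : (C i == C j) = (i == j).
Proof. by []. Qed.

Lemma excess_as_sum m K : (midx m <= K)%N ->
  excess m = (\sum_(2 <= i < K.+1) (i - 1) * (m == C i))%N.
Proof.
case: m => j /= hj; last by rewrite big1 // => i _; rewrite muln0.
rewrite (eq_bigr (fun i => if i == j then i - 1 else 0)%N); last first.
  by move=> i _; rewrite eq_C eq_sym; case: (i == j); rewrite ?muln1 ?muln0.
rewrite -big_mkcond big_nat1_eq; case: ifP => //; lia.
Qed.

Lemma sum_excess_MC K ms : all (fun m => midx m <= K)%N ms ->
  (\sum_(m <- ms) excess m = \sum_(2 <= i < K.+1) (i - 1) * MC ms i)%N.
Proof.
elim: ms => [|m ms IH].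
  by rewrite big_nil big1 // => i _; rewrite /MC muln0.
case/andP=> hm hms; rewrite big_cons IH // (excess_as_sum hm) -big_split /=.
by apply: eq_bigr => i _; rewrite /MC /= mulnDr.
Qed.

Lemma excess_eq0 ms :
  (\sum_(m <- ms) excess m)%N = 0%N <-> forall i, (2 <= i)%N -> MC ms i = 0%N.
Proof.
split=> [/eqP|h]; first rewrite sum_nat_seq_eq0.
  move=> /allP hall i hi; apply/count_memPn/negP => /hall /=; lia.
apply/eqP; rewrite sum_nat_seq_eq0; apply/allP => -[j|j] hin //=.
case: (leqP j 1) => hj; first by lia.
by have /count_memPn := h j hj; rewrite hin.
Qed.

Theorem mainTheorem6 (n : nat) (delta : nat -> nat) (imax : nat) (ms : seq move) :
  (1 <= n)%N -> zeckendorf n delta imax -> game_path n ms ->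
  ((size ms)%:Z =
     \sum_(1 <= i < imax.+1) acoef i * (delta i)%:Z
     - ((\sum_(2 <= i < (maxidx ms).+1) (i - 1) * MC ms i)%N)%:Z)
  /\
  ((size ms)%:Z = \sum_(1 <= i < imax.+1) acoef i * (delta i)%:Z
     <-> (forall i, (2 <= i)%N -> MC ms i = 0%N)).
Proof.
move=> _ hz hp.
rewrite -(sum_excess_MC (midx_le_maxidx ms)) -excess_eq0.
rewrite -(game_length_identity hz hp).
by split; [lia | split=> h; lia].
Qed.
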